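(* Consider a causal transformer viewed as a message-passing network on token positions $1,\dots,n$, with token representations $h^{(l)}_i\in\mathbb{R}^{k}$ at layer $l$ updated by $$h^{(l+1)}_i=\phi_l\Big(h^{(l)}_i,\ \sum_{j\le i}A^{(l)}_{ij}\,\psi_l\big(h^{(l)}_j\big)\Big),$$ where for every layer $l$: $A^{(l)}\in\mathbb{R}^{n\times n}$ is a lower-triangular, row-stochastic matrix with nonnegative entries that is treated as fixed (independent of the representations $h$); $\psi_l:\mathbb{R}^k\to\mathbb{R}^{k}$ and $\phi_l:\mathbb{R}^k\times\mathbb{R}^k\to\mathbb{R}^k$ are differentiable. Suppose there is a constant $C>0$ such that for all layers $l$ and all arguments, $\|\partial_1\phi_l\|\le C$ and $\|\partial_2\phi_l\|\,\|\nabla\psi_l\|\le C$ (operator norms), where $\partial_1,\partial_2$ denote the Jacobians of $\phi_l$ with respect to its first and second arguments. Then for every layer $L\ge 0$, every $r\ge 0$, and all positions $s\le d$, $$\left\|\frac{\partial h^{(L+r)}_d}{\partial h^{(L)}_s}\right\|\le C^{r}\Big(\prod_{t=0}^{r-1}\big(I+A^{(L+t)}\big)\Big)_{ds},$$ where $I$ is the $n\times n$ identity, the product is ordered with later layers on the left, i.e. $\prod_{t=0}^{r-1}(I+A^{(L+t)})=(I+A^{(L+r-1)})\cdots(I+A^{(L)})$, and the empty product ($r=0$) is $I$.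
   Context: $\|\cdot\|$ denotes the operator norm of a Jacobian matrix. In a standard transformer, $\psi_l(h_j)=h_jW_V$ (value projection), $A^{(l)}_{ij}$ are the causal softmax attention weights, and $\phi_l$ absorbs the residual connection, layer norms and MLP; the theorem is stated under the simplifying assumption that the attention weights do not depend on $h$. *)

From HB Require Import structures.
From mathcomp Require Import all_boot all_order all_algebra.
From mathcomp Require Import all_classical all_reals all_analysis.
Set Implicit Arguments. Unset Strict Implicit. Unset Printing Implicit Defensive.
Import Order.TTheory GRing.Theory Num.Theory.
Import numFieldNormedType.Exports.
Local Open Scope classical_set_scope.
Local Open Scope ring_scope.

Definition enorm {R : realType} {k : nat} (v : 'rV[R]_k) : R :=
  Num.sqrt (\sum_(j < k) v 0 j ^+ 2).

Definition opnorm {R : realType} {k m : nat} (f : 'rV[R]_k -> 'rV[R]_m) : R :=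
  sup [set enorm (f x) | x in [set x : 'rV[R]_k | enorm x <= 1]].

Definition setrow {R : realType} {n k : nat} (H : 'M[R]_(n, k)) (s : 'I_n)
  (x : 'rV[R]_k) : 'M[R]_(n, k) :=
  \matrix_(i, j) (if i == s then x 0 j else H i j).

Definition layer {R : realType} {n k : nat}
  (phi : nat -> 'rV[R]_k * 'rV[R]_k -> 'rV[R]_k) (psi : nat -> 'rV[R]_k -> 'rV[R]_k)
  (A : nat -> 'M[R]_n) (l : nat) (H : 'M[R]_(n, k)) : 'M[R]_(n, k) :=
  \matrix_(i, j)
    (phi l (row i H, \sum_(j0 < n | (j0 <= i)%N) A l i j0 *: psi l (row j0 H))) 0 j.

Fixpoint run {R : realType} {n k : nat}
  (phi : nat -> 'rV[R]_k * 'rV[R]_k -> 'rV[R]_k) (psi : nat -> 'rV[R]_k -> 'rV[R]_k)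
  (A : nat -> 'M[R]_n) (L r : nat) (H : 'M[R]_(n, k)) : 'M[R]_(n, k) :=
  match r with
  | 0 => H
  | r'.+1 => layer phi psi A (L + r') (run phi psi A L r' H)
  end.

Fixpoint prodIA {R : realType} {n : nat} (A : nat -> 'M[R]_n) (L r : nat) : 'M[R]_n :=
  match r with
  | 0 => 1%:M
  | r'.+1 => (1%:M + A (L + r')) *m prodIA A L r'
  end.

From HB Require Import structures.
From mathcomp Require Import all_boot all_order all_algebra.
From mathcomp Require Import all_classical all_reals all_analysis.
From mathcomp Require Import ring lra.
Set Implicit Arguments. Unset Strict Implicit. Unset Printing Implicit Defensive.
Import Order.TTheory GRing.Theory Num.Theory.
Import numFieldNormedType.Exports.
Local Open Scope classical_set_scope.
Local Open Scope ring_scope.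

(* By the chain rule, the Jacobian of token i after layer l is
   [d1 phi_l . J_i + d2 phi_l . sum_(j <= i) A_ij grad psi_l . J_j], so the
   hypotheses give, for the vector e of norms of the Jacobians applied to a
   fixed direction v, the entrywise recursion [e' <= C (I + A) e].  Since
   I + A is entrywise nonnegative this iterates to
   [e^(r) <= C^r (I + A^(L+r-1)) ... (I + A^(L)) e^(0)], and e^(0) is |v| times
   the s-th unit vector; the operator norm is then bounded direction by
   direction. *)

Lemma sum_mul_sqr_le (R : realDomainType) (I : finType) (a b : I -> R) :
  (\sum_i a i * b i) ^+ 2 <= (\sum_i a i ^+ 2) * (\sum_i b i ^+ 2).
Proof.
have sum_mulE (f g : I -> R) :
    (\sum_i f i) * (\sum_j g j) = \sum_i \sum_j f i * g j.
  by rewrite mulr_suml; apply: eq_bigr => i _; rewrite mulr_sumr.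
have lagrange_identity : \sum_i \sum_j (a i * b j - a j * b i) ^+ 2 =
    (\sum_i a i ^+ 2) * (\sum_j b j ^+ 2) + (\sum_i b i ^+ 2) * (\sum_j a j ^+ 2)
    - 2 * ((\sum_i a i * b i) * (\sum_j a j * b j)).
  rewrite !sum_mulE mulr_sumr -big_split -sumrB; apply: eq_bigr => i _.
  by rewrite mulr_sumr -big_split -sumrB; apply: eq_bigr => j _ /=; ring.
have : 0 <= \sum_i \sum_j (a i * b j - a j * b i) ^+ 2.
  by do 2![apply: sumr_ge0 => ? _]; exact: sqr_ge0.
rewrite lagrange_identity expr2 [(\sum_i b i ^+ 2) * _]mulrC; lra.
Qed.

Section EuclideanNorm.
Variables (R : realType) (k : nat).
Implicit Types (u v : 'rV[R]_k) (a : R).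

Lemma enorm_ge0 v : 0 <= enorm v.
Proof. exact: sqrtr_ge0. Qed.

Lemma enorm_sqr v : enorm v ^+ 2 = \sum_j v 0 j ^+ 2.
Proof. by rewrite sqr_sqrtr // sumr_ge0 // => j _; exact: sqr_ge0. Qed.

Lemma enorm0 : enorm (0 : 'rV[R]_k) = 0.
Proof. by rewrite /enorm big1 ?sqrtr0 // => j _; rewrite mxE expr0n. Qed.

Lemma enormZ a v : enorm (a *: v) = `|a| * enorm v.
Proof.
rewrite /enorm (eq_bigr (fun j => a ^+ 2 * v 0 j ^+ 2)) => [|j _]; last first.
  by rewrite mxE exprMn.
by rewrite -mulr_sumr sqrtrM ?sqr_ge0 // sqrtr_sqr.
Qed.

Lemma enorm_eq0 v : enorm v = 0 -> v = 0.
Proof.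
move=> /(congr1 (fun x => x ^+ 2)); rewrite enorm_sqr expr0n /= => /eqP.
rewrite psumr_eq0 => [/allP v0|j _]; last exact: sqr_ge0.
by apply/rowP => j; rewrite mxE; apply/eqP; rewrite -sqrf_eq0; exact: (implyP (v0 j (mem_index_enum j))).
Qed.

Lemma coord_le_enorm v j : `|v 0 j| <= enorm v.
Proof.
rewrite -sqrtr_sqr ler_sqrt ?sumr_ge0 // => [|i _]; last exact: sqr_ge0.
by rewrite (bigD1 j) //= lerDl sumr_ge0 // => i _; exact: sqr_ge0.
Qed.

Lemma mx_norm_le_enorm v : `|v| <= enorm v.
Proof.
rewrite (_ : `|v| = mx_norm v) // mx_normrE; apply: bigmax_le => [|[i j] _ /=].
  exact: enorm_ge0.
by rewrite (ord1 i); exact: coord_le_enorm.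
Qed.

Lemma enorm_le_mx_norm v : enorm v <= Num.sqrt k%:R * `|v|.
Proof.
rewrite -(ger0_norm (normr_ge0 v)) -sqrtr_sqr -sqrtrM // ler_sqrt ?mulr_ge0 ?sqr_ge0 //.
rewrite -[k in k%:R]card_ord -sumr_const mulr_suml; apply: ler_sum => j _.
rewrite mul1r -[v 0 j ^+ 2]real_normK ?num_real // ler_sqr ?nnegrE //.
by rewrite (_ : `|v| = mx_norm v) // mx_normrE; apply: le_bigmax (0, j).
Qed.

Lemma sum_mul_le_enorm u v : \sum_j u 0 j * v 0 j <= enorm u * enorm v.
Proof.
apply: le_trans (ler_norm _) _.
rewrite -ler_sqr ?nnegrE ?mulr_ge0 ?enorm_ge0 // real_normK ?num_real //.
by rewrite exprMn !enorm_sqr sum_mul_sqr_le.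
Qed.

Lemma enormD u v : enorm (u + v) <= enorm u + enorm v.
Proof.
rewrite -ler_sqr ?nnegrE ?addr_ge0 ?enorm_ge0 // sqrrD !enorm_sqr.
have := sum_mul_le_enorm u v.
have -> : \sum_j (u + v) 0 j ^+ 2 =
    \sum_j u 0 j ^+ 2 + \sum_j v 0 j ^+ 2 + 2 * \sum_j u 0 j * v 0 j.
  by rewrite mulr_sumr -!big_split; apply: eq_bigr => j _; rewrite mxE /=; ring.
rewrite -!enorm_sqr; lra.
Qed.

Lemma enorm_sum (I : Type) (r : seq I) (P : pred I) (F : I -> 'rV[R]_k) :
  enorm (\sum_(i <- r | P i) F i) <= \sum_(i <- r | P i) enorm (F i).
Proof.
elim/big_ind2: _ => [|x1 x2 y1 y2 le1 le2|//]; first by rewrite enorm0.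
exact: le_trans (enormD _ _) (lerD le1 le2).
Qed.

End EuclideanNorm.

Section OperatorNorm.
Variables (R : realType) (k m : nat).

Lemma opnorm_le (f : 'rV[R]_k -> 'rV[R]_m) (B : R) :
  0 <= B -> (forall v, enorm (f v) <= B * enorm v) -> opnorm f <= B.
Proof.
move=> B_ge0 fB; apply: ge_sup => [|_ [x /= x_le1 <-]].
  by exists (enorm (f 0)), 0 => //=; rewrite enorm0.
by apply: le_trans (fB x) _; rewrite -[leRHS]mulr1 ler_wpM2l.
Qed.

Variable D : {linear 'rV[R]_k -> 'rV[R]_m}.
Hypothesis D_cont : continuous D.

Lemma has_ubound_opnorm :
  has_ubound [set enorm (D x) | x in [set x : 'rV[R]_k | enorm x <= 1]].
Proof.
have [K K_gt0 DK] := linear_lipschitz D_cont.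
exists (Num.sqrt m%:R * K) => _ [x /= x_le1 <-].
apply: le_trans (enorm_le_mx_norm _) _; rewrite ler_wpM2l ?sqrtr_ge0 //.
apply: le_trans (DK x) _; rewrite -[leRHS]mulr1 ler_wpM2l ?(ltW K_gt0) //.
exact: le_trans (mx_norm_le_enorm _) x_le1.
Qed.

Lemma opnorm_ge0 : 0 <= opnorm D.
Proof.
apply: ub_le_sup; first exact: has_ubound_opnorm.
by exists 0; rewrite /= ?enorm0 // linear0 enorm0.
Qed.

Lemma enorm_linear_le v : enorm (D v) <= opnorm D * enorm v.
Proof.
have [/enorm_eq0 ->|v_neq0] := eqVneq (enorm v) 0.
  by rewrite linear0 !enorm0 mulr0.
have v_gt0 : 0 < enorm v by rewrite lt_def v_neq0 enorm_ge0.
have Dw_le : enorm (D ((enorm v)^-1 *: v)) <= opnorm D.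
  apply: ub_le_sup; first exact: has_ubound_opnorm.
  exists ((enorm v)^-1 *: v) => //=.
  by rewrite enormZ ger0_norm ?invr_ge0 ?enorm_ge0 // mulVf.
rewrite linearZ enormZ ger0_norm ?invr_ge0 ?enorm_ge0 // in Dw_le.
by rewrite -ler_pdivrMr // mulrC.
Qed.

End OperatorNorm.

Section Differentials.
Variables (R : realType) (U V W : normedModType R).

Lemma is_diff_sum (I : Type) (r : seq I) (P : pred I) (F dF : I -> V -> W) x :
  (forall i, P i -> is_diff x (F i) (dF i)) ->
  is_diff x (\sum_(i <- r | P i) F i) (\sum_(i <- r | P i) dF i).
Proof.
move=> FdF; elim/big_ind2: _ => //; first exact: is_diff_cst.
by move=> ? ? ? ? ? ?; exact: is_diffD.
Qed.

Variables (f : U * V -> W) (a : U) (b : V).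
Hypothesis f_diff : differentiable f (a, b).

Lemma is_diff_partial1 : is_diff a (fun u => f (u, b)) (fun u => 'd f (a, b) (u, 0)).
Proof.
have := @is_diff_comp _ _ _ _ (fun u => (u, b)) (fun u => (u, 0)) f ('d f (a, b)) a.
by apply; exact: differentiableP.
Qed.

Lemma is_diff_partial2 : is_diff b (fun v => f (a, v)) (fun v => 'd f (a, b) (0, v)).
Proof.
have := @is_diff_comp _ _ _ _ (fun v => (a, v)) (fun v => (0, v)) f ('d f (a, b)) b.
by apply; exact: differentiableP.
Qed.

Lemma diff_partialE u v :
  'd f (a, b) (u, v) = 'd (fun u => f (u, b)) a u + 'd (fun v => f (a, v)) b v.
Proof.
rewrite (@diff_val _ _ _ _ _ _ _ is_diff_partial1).
rewrite (@diff_val _ _ _ _ _ _ _ is_diff_partial2) -linearD.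
by congr ('d f (a, b) _); apply/eqP; rewrite xpair_eqE /= addr0 add0r !eqxx.
Qed.

End Differentials.

Lemma row_setrow (R : realType) n k (H : 'M[R]_(n, k)) s x i :
  row i (setrow H s x) = if i == s then x else row i H.
Proof. by apply/rowP => j; rewrite !mxE; case: eqP; rewrite ?mxE. Qed.

Lemma is_diff_row_setrow (R : realType) n k (H : 'M[R]_(n, k)) s i :
  is_diff (row s H) (fun x => row i (setrow H s x)) (fun v => if i == s then v else 0).
Proof.
under eq_fun do rewrite row_setrow.
by case: eqP => _; [exact: is_diff_id | exact: is_diff_cst].
Qed.

Section Network.
Variables (R : realType) (n k : nat) (A : nat -> 'M[R]_n).
Variables (phi : nat -> 'rV[R]_k * 'rV[R]_k -> 'rV[R]_k) (psi : nat -> 'rV[R]_k -> 'rV[R]_k).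
Variable C : R.
Hypothesis A_ge0 : forall l i j, 0 <= A l i j.
Hypothesis phi_diff : forall l z, differentiable (phi l) z.
Hypothesis psi_diff : forall l x, differentiable (psi l) x.
Hypothesis C_ge0 : 0 <= C.
Hypothesis phi_diff1_le : forall l x y, opnorm ('d (fun u => phi l (u, y)) x) <= C.
Hypothesis phi_psi_diff_le : forall l x y z,
  opnorm ('d (fun v => phi l (x, v)) y) * opnorm ('d (psi l) z) <= C.

Lemma prodIAS L r i s :
  prodIA A L r.+1 i s = prodIA A L r i s + \sum_j A (L + r)%N i j * prodIA A L r j s.
Proof. by rewrite /= mulmxDl mul1mx !mxE. Qed.

Lemma prodIA_ge0 L r i s : 0 <= prodIA A L r i s.
Proof.
elim: r i s => [|r IHr] i s; first by rewrite /= mxE ler0n.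
by rewrite prodIAS addr_ge0 // sumr_ge0 // => j _; rewrite mulr_ge0.
Qed.

Lemma row_layer l (H : 'M[R]_(n, k)) i :
  row i (layer phi psi A l H) =
  phi l (row i H, \sum_(j < n | (j <= i)%N) A l i j *: psi l (row j H)).
Proof. by apply/rowP => j; rewrite !mxE. Qed.

Section Layer.
Variables (V : normedModType R) (M : V -> 'M[R]_(n, k)) (x : V).
Hypothesis M_diff : forall j, differentiable (fun y => row j (M y)) x.

Let message l (i : 'I_n) y :=
  \sum_(j < n | (j <= i)%N) A l i j *: psi l (row j (M y)).

Let dmessage l (i : 'I_n) v :=
  \sum_(j < n | (j <= i)%N) A l i j *: 'd (psi l) (row j (M x)) ('d (fun y => row j (M y)) x v).

Lemma is_diff_message l i : is_diff x (message l i) (dmessage l i).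
Proof.
have := @is_diff_sum _ _ _ _ (index_enum 'I_n) (fun j : 'I_n => (j <= i)%N)
  (fun j => A l i j *: (psi l \o (fun y => row j (M y))))
  (fun j => A l i j *: ('d (psi l) (row j (M x)) \o 'd (fun y => row j (M y)) x)) x.
rewrite !fct_sumE; apply => j _.
by apply: is_diffZ; apply: is_diff_comp; exact: differentiableP.
Qed.

Lemma layer_rowE l i :
  (fun y => row i (layer phi psi A l (M y))) =
  phi l \o (fun y => (row i (M y), message l i y)).
Proof. by apply/funext => y; rewrite /= row_layer. Qed.

Lemma is_diff_layer_row l i :
  is_diff x (fun y => row i (layer phi psi A l (M y)))
    (fun v => 'd (phi l) (row i (M x), message l i x)
                ('d (fun y => row i (M y)) x v, dmessage l i v)).
Proof.
rewrite layer_rowE; apply: is_diff_comp; last exact: differentiableP.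
by apply: is_diff_pair; [exact: differentiableP | exact: is_diff_message].
Qed.

Lemma enorm_diff_layer_row_le l i v :
  enorm ('d (fun y => row i (layer phi psi A l (M y))) x v) <=
  C * (enorm ('d (fun y => row i (M y)) x v) +
       \sum_j A l i j * enorm ('d (fun y => row j (M y)) x v)).
Proof.
move: (fun y => row i (layer phi psi A l (M y))) (is_diff_layer_row l i) => f f_diff.
have dfE := congr1 (fun g : V -> 'rV[R]_k => g v) (@diff_val _ _ _ _ _ _ _ f_diff).
have phi_diff_lix := phi_diff l (row i (M x), message l i x).
have [phi_diff1 _] := is_diff_partial1 phi_diff_lix.
have [phi_diff2 _] := is_diff_partial2 phi_diff_lix.
(* Unrestricted rewrites here would try, very slowly, to unify with the
   Jacobians on the right-hand side. *)
rewrite [in X in X <= _]dfE [in X in X <= _](diff_partialE phi_diff_lix).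
apply: le_trans (enormD _ _) _; rewrite mulrDr; apply: lerD.
  apply: le_trans (enorm_linear_le (diff_continuous phi_diff1) _) _.
  by rewrite ler_wpM2r ?enorm_ge0 ?phi_diff1_le.
apply: le_trans (enorm_linear_le (diff_continuous phi_diff2) _) _.
have dmessage_le : enorm (dmessage l i v) <= \sum_(j < n | (j <= i)%N)
    A l i j * (opnorm ('d (psi l) (row j (M x))) * enorm ('d (fun y => row j (M y)) x v)).
  apply: le_trans (enorm_sum _ _ _) _; apply: ler_sum => j _.
  rewrite enormZ ger0_norm // ler_wpM2l //.
  exact: enorm_linear_le (diff_continuous (psi_diff _ _)) _.
apply: le_trans (ler_wpM2l (opnorm_ge0 (diff_continuous phi_diff2)) dmessage_le) _.
rewrite !mulr_sumr big_mkcond /=; apply: ler_sum => j _; case: ifP => _.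
  by rewrite mulrCA [C * _]mulrCA ler_wpM2l // mulrA ler_wpM2r ?enorm_ge0 ?phi_psi_diff_le.
by rewrite !mulr_ge0 ?enorm_ge0.
Qed.

End Layer.

Lemma differentiable_run_row L r s H i :
  differentiable (fun x => row i (run phi psi A L r (setrow H s x))) (row s H).
Proof.
elim: r i => [|r IHr] i; first by have [] := is_diff_row_setrow H s i.
by have [] := is_diff_layer_row IHr (L + r) i.
Qed.

Lemma enorm_diff_run_row_le L r s H i v :
  enorm ('d (fun x => row i (run phi psi A L r (setrow H s x))) (row s H) v) <=
  C ^+ r * prodIA A L r i s * enorm v.
Proof.
elim: r i => [|r IHr] i.
  have dE := congr1 (fun g : 'rV[R]_k -> 'rV[R]_k => g v)
    (@diff_val _ _ _ _ _ _ _ (is_diff_row_setrow H s i)).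
  rewrite [in X in X <= _]dE /= expr0 mul1r mxE.
  by case: (i == s); rewrite ?mul1r ?mul0r ?enorm0.
apply: le_trans (enorm_diff_layer_row_le (differentiable_run_row L r s H) _ _ _) _.
rewrite prodIAS exprS -!mulrA ler_wpM2l // mulrA mulrDr mulrDl.
apply: lerD; first exact: IHr.
rewrite mulr_sumr mulr_suml; apply: ler_sum => j _.
by rewrite (mulrCA (C ^+ r)) -mulrA ler_wpM2l.
Qed.

End Network.

Theorem theorem3p1 (R : realType) (n k : nat)
  (A : nat -> 'M[R]_n)
  (phi : nat -> 'rV[R]_k * 'rV[R]_k -> 'rV[R]_k)
  (psi : nat -> 'rV[R]_k -> 'rV[R]_k)
  (C : R) :
  (forall l (i j : 'I_n), (i < j)%N -> A l i j = 0) ->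
  (forall l (i j : 'I_n), 0 <= A l i j) ->
  (forall l (i : 'I_n), \sum_(j < n) A l i j = 1) ->
  (forall l (z : 'rV[R]_k * 'rV[R]_k), differentiable (phi l) z) ->
  (forall l (x : 'rV[R]_k), differentiable (psi l) x) ->
  0 < C ->
  (forall l (x y : 'rV[R]_k), opnorm ('d (fun u => phi l (u, y)) x) <= C) ->
  (forall l (x y z : 'rV[R]_k),
      opnorm ('d (fun v => phi l (x, v)) y) * opnorm ('d (psi l) z) <= C) ->
  forall (L r : nat) (s d : 'I_n), (s <= d)%N ->
  forall H : 'M[R]_(n, k),
    opnorm ('d (fun x => row d (run phi psi A L r (setrow H s x))) (row s H))
      <= C ^+ r * prodIA A L r d s.
Proof.
move=> _ A_ge0 _ phi_diff psi_diff C_gt0 phi_diff1_le phi_psi_diff_le L r s d _ H.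
apply: opnorm_le => [|v]; first by rewrite mulr_ge0 ?exprn_ge0 ?(ltW C_gt0) ?prodIA_ge0.
exact: (@enorm_diff_run_row_le R n k A phi psi C A_ge0 phi_diff psi_diff
  (ltW C_gt0) phi_diff1_le phi_psi_diff_le).
Qed.
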